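(* In the setting of the context (CFSR scheme: flux reconstruction with chain-rule flux derivatives), let $\mathcal{E}_j=(\Phi_{j+1/2}-\Phi_{j-1/2})/h$ evaluated on exact nodal values. If $\kappa_3=0$, then as $h\to0$ with derivatives at $x_j$, $$\mathcal{E}_j=\frac{\partial f}{\partial x}+\frac{3\theta-1}{12}\frac{\partial^3 f}{\partial x^3}h^2-\frac{\kappa-1}{8}\left[\frac{\partial D}{\partial x}\frac{\partial^3 u}{\partial x^3}+D(u(x_j))\frac{\partial^4 u}{\partial x^4}\right]h^3+O(h^4),$$ where $f$ denotes $f(u(x))$ and $\partial D/\partial x=\frac{d}{dx}D(u(x))$; thus $\theta=1/3$ gives third-order accuracy. Moreover, if $\theta=1/3$ and $\kappa_3=\kappa-1$, then $\mathcal{E}_j=\frac{\partial f}{\partial x}+O(h^4)$.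
   Context: Let $h>0$, uniform grid $x_i=ih$, $i\in\mathbb{Z}$. Let $u$ be a smooth real function of $x$, $u_i=u(x_i)$; let $f$ (flux) and $D$ (dissipation coefficient) be smooth real functions of one variable; $f_i=f(u_i)$. Define successive central differences $(u_x)_i=(u_{i+1}-u_{i-1})/(2h)$, $(u_{xx})_i=((u_x)_{i+1}-(u_x)_{i-1})/(2h)$. For the face $i+1/2$ with $j=i$, $k=i+1$, let $T_j=\frac h4((u_x)_k-(u_x)_j)-\frac{h^2}{4}(u_{xx})_j$, $T_k=\frac h4((u_x)_k-(u_x)_j)-\frac{h^2}{4}(u_{xx})_k$, and reconstructed states (parameters $\kappa,\kappa_3$) $u_L=\kappa\frac{u_j+u_k}{2}+(1-\kappa)[u_j+\frac h2(u_x)_j]+\kappa_3T_j$, $u_R=\kappa\frac{u_j+u_k}{2}+(1-\kappa)[u_k-\frac h2(u_x)_k]+\kappa_3T_k$. Reconstructed fluxes with parameter $\theta$ and chain-rule derivatives: $f_L=\theta\frac{f_j+f_k}{2}+(1-\theta)[f_j+f'(u_j)\frac h2(u_x)_j]$, $f_R=\theta\frac{f_j+f_k}{2}+(1-\theta)[f_k-f'(u_k)\frac h2(u_x)_k]$. Numerical flux: $\Phi_{i+1/2}=\frac12(f_L+f_R)-\frac12D_{i+1/2}(u_R-u_L)$, with $D_{i+1/2}=\bar D(u_i,u_{i+1})$ for a smooth symmetric $\bar D$ with $\bar D(v,v)=D(v)$. *)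

From Stdlib Require Import Reals ZArith.
From Coquelicot Require Import Coquelicot.
Open Scope R_scope.

Definition smooth1 (g : R -> R) : Prop :=
  forall (n : nat) (x : R), ex_derive (Derive_n g n) x.

Definition smooth2 (F : R -> R -> R) : Prop :=
  exists pd : nat -> nat -> R -> R -> R,
    pd 0%nat 0%nat = F /\
    forall (m n : nat) (x y : R),
      is_derive (fun t => pd m n t y) x (pd (S m) n x y) /\
      is_derive (fun t => pd m n x t) y (pd m (S n) x y) /\
      continuous (fun p : R * R => pd m n (fst p) (snd p)) (x, y).

Definition ux (uv : Z -> R) (h : R) (i : Z) : R :=
  (uv (i + 1)%Z - uv (i - 1)%Z) / (2 * h).
Definition uxx (uv : Z -> R) (h : R) (i : Z) : R :=
  (ux uv h (i + 1)%Z - ux uv h (i - 1)%Z) / (2 * h).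

(* CFSR numerical flux at face i+1/2 (j = i, k = i+1) *)
Definition cfsr_flux (f D : R -> R) (Dbar : R -> R -> R)
    (kappa kappa3 theta h : R) (uv : Z -> R) (i : Z) : R :=
  let j := i in let k := (i + 1)%Z in
  let Tj := h / 4 * (ux uv h k - ux uv h j) - h ^ 2 / 4 * uxx uv h j in
  let Tk := h / 4 * (ux uv h k - ux uv h j) - h ^ 2 / 4 * uxx uv h k in
  let uL := kappa * ((uv j + uv k) / 2)
            + (1 - kappa) * (uv j + h / 2 * ux uv h j) + kappa3 * Tj in
  let uR := kappa * ((uv j + uv k) / 2)
            + (1 - kappa) * (uv k - h / 2 * ux uv h k) + kappa3 * Tk in
  let fL := theta * ((f (uv j) + f (uv k)) / 2)
            + (1 - theta) * (f (uv j) + Derive f (uv j) * (h / 2) * ux uv h j) in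
  let fR := theta * ((f (uv j) + f (uv k)) / 2)
            + (1 - theta) * (f (uv k) - Derive f (uv k) * (h / 2) * ux uv h k) in
  (fL + fR) / 2 - Dbar (uv j) (uv k) * (uR - uL) / 2.

Definition cfsr_E (f D : R -> R) (Dbar : R -> R -> R)
    (kappa kappa3 theta : R) (u : R -> R) (h : R) (j : Z) : R :=
  let uv := fun i : Z => u (IZR i * h) in
  (cfsr_flux f D Dbar kappa kappa3 theta h uv j
   - cfsr_flux f D Dbar kappa kappa3 theta h uv (j - 1)%Z) / h.

(* E_j is exactly the centred difference (F(x+h) - F(x-h))/(2h) of F = f o u, minus
   (1 - theta)/4 times the second difference of the chain-rule slopes f'(u_i) (u_x)_i,
   minus the difference across the two faces of Dbar (u_R - u_L), divided by 2h.
   Taylor expansion with remainders bounded uniformly on compact sets gives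
   F' + h^2 F'''/6 for the first part and h^2 (f'(u) u')'' = h^2 F''' + O(h^4) for the
   second, which together produce the (3 theta - 1)/12 coefficient.  For the third,
   u_R - u_L = (kappa - 1 - kappa3)/4 h^3 u''' + O(h^5) evaluated at the face, and
   Dbar(u_j, u_(j+-1)) = D(u_j) +- h d2Dbar(u_j, u_j) u' + O(h^2), where symmetry of Dbar
   gives 2 d2Dbar(v, v) = D'(v); the face difference divided by 2h is therefore
   (kappa - 1 - kappa3)/8 h^3 (D(u) u''')' + O(h^4).  With kappa3 = kappa - 1 this term
   vanishes, and theta = 1/3 removes the h^2 term. *)

From Stdlib Require Import Reals ZArith Lra Lia FunctionalExtensionality.
From Coquelicot Require Import Coquelicot.
Open Scope R_scope.

Definition derivable_upto (n : nat) (g : R -> R) : Prop :=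
  forall k x, (k <= n)%nat -> ex_derive (Derive_n g k) x.

Lemma Derive_n_S_Derive (g : R -> R) (k : nat) :
  Derive_n g (S k) = Derive_n (Derive g) k.
Proof.
  apply functional_extensionality; intro x.
  rewrite <- Nat.add_1_r, <- (Derive_n_comp g k 1). reflexivity.
Qed.

Lemma derivable_upto_0 (g : R -> R) :
  derivable_upto 0 g <-> forall x, ex_derive g x.
Proof.
  split; intros H.
  - intro x. exact (H 0%nat x (le_n 0)).
  - intros k x Hk. replace k with 0%nat by lia. apply H.
Qed.

Lemma derivable_upto_S (n : nat) (g : R -> R) :
  derivable_upto (S n) g <-> (forall x, ex_derive g x) /\ derivable_upto n (Derive g).
Proof.
  split.
  - intros H. split.
    + intro x. apply (H 0%nat x). lia.
    + intros k x Hk. rewrite <- Derive_n_S_Derive. apply H. lia.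
  - intros [H0 H] [|k] x Hk.
    + apply H0.
    + rewrite Derive_n_S_Derive. apply H. lia.
Qed.

Lemma smooth1_derivable_upto (g : R -> R) : smooth1 g <-> forall n, derivable_upto n g.
Proof.
  split; intros H.
  - intros n k x _. apply H.
  - intros n x. apply (H n n x). lia.
Qed.

Lemma derivable_upto_plus (n : nat) : forall a b : R -> R,
  derivable_upto n a -> derivable_upto n b -> derivable_upto n (fun x => a x + b x).
Proof.
  induction n as [|n IH]; intros a b Ha Hb.
  - rewrite derivable_upto_0 in *. intro x. apply (ex_derive_plus a b x); auto.
  - apply derivable_upto_S in Ha as [Ha0 Ha1]. apply derivable_upto_S in Hb as [Hb0 Hb1].
    apply derivable_upto_S. split.
    + intro x. apply (ex_derive_plus a b x); auto.
    + replace (Derive (fun x => a x + b x)) with (fun x => Derive a x + Derive b x).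
      * apply IH; auto.
      * apply functional_extensionality; intro x. rewrite Derive_plus; auto.
Qed.

Lemma derivable_upto_mult (n : nat) : forall a b : R -> R,
  derivable_upto n a -> derivable_upto n b -> derivable_upto n (fun x => a x * b x).
Proof.
  induction n as [|n IH]; intros a b Ha Hb.
  - rewrite derivable_upto_0 in *. intro x. apply (ex_derive_mult a b x); auto.
  - assert (Ha' : derivable_upto n a) by (intros k x Hk; apply Ha; lia).
    assert (Hb' : derivable_upto n b) by (intros k x Hk; apply Hb; lia).
    apply derivable_upto_S in Ha as [Ha0 Ha1]. apply derivable_upto_S in Hb as [Hb0 Hb1].
    apply derivable_upto_S. split.
    + intro x. apply (ex_derive_mult a b x); auto.
    + replace (Derive (fun x => a x * b x)) with (fun x => Derive a x * b x + a x * Derive b x).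
      * apply derivable_upto_plus; apply IH; auto.
      * apply functional_extensionality; intro x. rewrite Derive_mult; auto.
Qed.

Lemma smooth1_Derive (g : R -> R) : smooth1 g -> smooth1 (Derive g).
Proof. intros H n x. rewrite <- Derive_n_S_Derive. apply H. Qed.

Lemma derivable_upto_comp (n : nat) : forall a b : R -> R,
  smooth1 a -> smooth1 b -> derivable_upto n (fun x => a (b x)).
Proof.
  induction n as [|n IH]; intros a b Ha Hb.
  - apply derivable_upto_0. intro x. apply ex_derive_comp; [apply (Ha 0%nat) | apply (Hb 0%nat)].
  - apply derivable_upto_S. split.
    + intro x. apply ex_derive_comp; [apply (Ha 0%nat) | apply (Hb 0%nat)].
    + replace (Derive (fun x => a (b x))) with (fun x => Derive a (b x) * Derive b x).
      * apply derivable_upto_mult.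
        -- apply IH; auto. apply smooth1_Derive; auto.
        -- apply smooth1_derivable_upto, smooth1_Derive; auto.
      * apply functional_extensionality; intro x.
        rewrite (Derive_comp a b x); [ring | apply (Ha 0%nat) | apply (Hb 0%nat)].
Qed.

Lemma smooth1_comp (a b : R -> R) : smooth1 a -> smooth1 b -> smooth1 (fun x => a (b x)).
Proof. intros Ha Hb. apply smooth1_derivable_upto. intro n. apply derivable_upto_comp; auto. Qed.

Lemma Derive_n_3_comp (f u : R -> R) (x : R) : smooth1 f -> smooth1 u ->
  let G := fun y => Derive f (u y) in
  Derive_n (fun y => f (u y)) 3 x =
  Derive_n G 2 x * Derive_n u 1 x + 2 * Derive_n G 1 x * Derive_n u 2 x + G x * Derive_n u 3 x.
Proof.
  intros Hf Hu G.
  assert (HG : smooth1 G) by exact (smooth1_comp _ u (smooth1_Derive f Hf) Hu).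
  assert (Hu1 : smooth1 (Derive u)) by (apply smooth1_Derive; auto).
  assert (HdF : Derive (fun y => f (u y)) = fun y => G y * Derive u y).
  { apply functional_extensionality; intro y. unfold G.
    rewrite (Derive_comp f u y); [ring | apply (Hf 0%nat) | apply (Hu 0%nat)]. }
  assert (HdGu : Derive (fun y => G y * Derive u y)
                 = fun y => Derive G y * Derive u y + G y * Derive (Derive u) y).
  { apply functional_extensionality; intro y. apply Derive_mult; [apply (HG 0%nat) | apply (Hu1 0%nat)]. }
  rewrite Derive_n_S_Derive, HdF, Derive_n_S_Derive, HdGu.
  change (Derive_n ?F 1 x) with (Derive F x).
  change (Derive_n ?F 2 x) with (Derive (Derive F) x).
  change (Derive_n u 3 x) with (Derive (Derive (Derive u)) x).
  rewrite Derive_plus, Derive_mult, Derive_mult.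
  - ring.
  - apply (HG 0%nat).
  - apply (Hu1 1%nat).
  - apply (HG 1%nat).
  - apply (Hu1 0%nat).
  - apply ex_derive_mult; [apply (HG 1%nat) | apply (Hu1 0%nat)].
  - apply ex_derive_mult; [apply (HG 0%nat) | apply (Hu1 1%nat)].
Qed.

Definition taylor_poly (g : R -> R) (N : nat) (x s : R) : R :=
  sum_f_R0 (fun m => s ^ m / INR (fact m) * Derive_n g m x) N.

Lemma taylor_poly_0 (g : R -> R) (N : nat) (x : R) : taylor_poly g N x 0 = g x.
Proof.
  unfold taylor_poly. induction N as [|N IH]; simpl sum_f_R0.
  - simpl. field.
  - rewrite IH. unfold Rdiv. ring.
Qed.

Lemma smooth1_ex_derive_n (g : R -> R) (k : nat) (x : R) : smooth1 g -> ex_derive_n g k x.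
Proof. intros Hg. destruct k; [exact I | apply Hg]. Qed.

Lemma taylor_lagrange_two_sided (g : R -> R) (N : nat) (y t : R) : smooth1 g ->
  exists z, Rabs (z - y) <= Rabs t /\
    g (y + t) = taylor_poly g N y t + t ^ S N / INR (fact (S N)) * Derive_n g (S N) z.
Proof.
  intros Hg.
  destruct (Rtotal_order t 0) as [Hneg | [H0 | Hpos]].
  - (* [Taylor_Lagrange] needs [x < y]: expand [s |-> g (- s)] from [- y] to [- y - t] *)
    set (k := fun s => g (- s)).
    assert (Hk : forall m z, Derive_n k m z = (-1) ^ m * Derive_n g m (- z)).
    { intros m z. apply Derive_n_comp_opp, filter_forall. intros; apply smooth1_ex_derive_n; auto. }
    assert (Hsign : forall m a, (- y - t - - y) ^ m / INR (fact m) * ((-1) ^ m * a)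
                                = t ^ m / INR (fact m) * a).
    { intros m a. replace (- y - t - - y) with (-1 * t) by ring.
      replace ((-1 * t) ^ m / INR (fact m) * ((-1) ^ m * a))
        with ((-1 * -1) ^ m * (t ^ m / INR (fact m) * a))
        by (rewrite !Rpow_mult_distr; unfold Rdiv; ring).
      replace (-1 * -1) with 1 by ring. rewrite pow1. ring. }
    destruct (Taylor_Lagrange k N (- y) (- y - t)) as [z [Hz Heq]]; [lra | |].
    { intros s _ j _. apply ex_derive_n_comp_opp, filter_forall.
      intros; apply smooth1_ex_derive_n; auto. }
    exists (- z). split; [rewrite Rabs_left, Rabs_left1; lra |].
    replace (g (y + t)) with (k (- y - t)) by (unfold k; f_equal; ring).
    rewrite Heq, Hk, Hsign. unfold taylor_poly. f_equal.
    apply sum_eq. intros m _. rewrite Hk, Ropp_involutive, Hsign. reflexivity.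
  - subst t. exists y. split.
    + rewrite Rminus_diag, Rabs_R0. lra.
    + rewrite Rplus_0_r, taylor_poly_0, (pow_i (S N)) by lia. unfold Rdiv. ring.
  - destruct (Taylor_Lagrange g N y (y + t)) as [z [Hz Heq]];
      [lra | intros; apply smooth1_ex_derive_n; auto |].
    exists z. split.
    + rewrite Rabs_right, Rabs_right; lra.
    + rewrite Heq. replace (y + t - y) with t by ring. reflexivity.
Qed.

Lemma continuous_bounded (g : R -> R) (L : R) : (forall x, continuous g x) ->
  exists B, forall y, Rabs y <= L -> Rabs (g y) <= B.
Proof.
  intros Hc. destruct (bounded_continuity g (- L) L) as [B HB]; [intros; apply Hc |].
  exists B. intros y Hy. apply Rabs_le_between in Hy.
  pose proof (HB y Hy) as H. change (norm (g y)) with (Rabs (g y)) in H. lra.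
Qed.

Lemma smooth1_continuous (g : R -> R) (k : nat) (x : R) :
  smooth1 g -> continuous (Derive_n g k) x.
Proof. intros H. exact (ex_derive_continuous _ x (H k x)). Qed.

Lemma taylor_remainder_bound (g : R -> R) (N : nat) (L : R) : smooth1 g ->
  exists C, forall y t, Rabs y <= L -> Rabs t <= 1 ->
    Rabs (g (y + t) - taylor_poly g N y t) <= C * Rabs t ^ S N.
Proof.
  intros Hg.
  destruct (continuous_bounded (Derive_n g (S N)) (L + 1)) as [B HB].
  { intro; apply smooth1_continuous; auto. }
  assert (Hf : 0 < INR (fact (S N))) by apply INR_fact_lt_0.
  exists (B / INR (fact (S N))). intros y t Hy Ht.
  destruct (taylor_lagrange_two_sided g N y t Hg) as [z [Hz ->]].
  replace (taylor_poly g N y t + t ^ S N / INR (fact (S N)) * Derive_n g (S N) z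
           - taylor_poly g N y t)
    with (t ^ S N / INR (fact (S N)) * Derive_n g (S N) z) by ring.
  assert (Hz' : Rabs z <= L + 1).
  { pose proof (Rabs_triang_inv z y). lra. }
  pose proof (HB z Hz') as Hgz.
  rewrite Rabs_mult, Rabs_div, <- RPow_abs, (Rabs_right (INR _)) by lra.
  assert (0 <= Rabs t ^ S N / INR (fact (S N)))
    by (apply Rdiv_le_0_compat; [apply pow_le, Rabs_pos | lra]).
  replace (B / INR (fact (S N)) * Rabs t ^ S N) with (Rabs t ^ S N / INR (fact (S N)) * B)
    by (unfold Rdiv; ring).
  apply Rmult_le_compat_l; auto.
Qed.

Definition bigO_h (k : nat) (g : R -> R -> R) : Prop :=
  forall M, 0 < M -> exists C delta, 0 < delta /\
    forall x h, Rabs x <= M -> 0 < h < delta -> Rabs (g x h) <= C * h ^ k.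

Lemma bigO_h_ext (k : nat) (g1 g2 : R -> R -> R) :
  (forall x h, 0 < h -> g1 x h = g2 x h) -> bigO_h k g1 -> bigO_h k g2.
Proof.
  intros He H M HM. destruct (H M HM) as [C [d [Hd HC]]]. exists C, d. split; auto.
  intros x h Hx Hh. rewrite <- He by lra. auto.
Qed.

Lemma bigO_h_le (k : nat) (g1 g2 : R -> R -> R) :
  (forall M, 0 < M -> exists K delta, 0 < delta /\ forall x h, Rabs x <= M -> 0 < h < delta ->
     Rabs (g1 x h) <= K * Rabs (g2 x h)) ->
  bigO_h k g2 -> bigO_h k g1.
Proof.
  intros Hd H M HM. destruct (Hd M HM) as [K [d1 [Hd1 HK]]].
  destruct (H M HM) as [C [d2 [Hd2 HC]]].
  exists (Rabs K * C), (Rmin d1 d2). split; [apply Rmin_pos; auto |].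
  intros x h Hx Hh. pose proof (Rmin_l d1 d2). pose proof (Rmin_r d1 d2).
  specialize (HK x h Hx ltac:(lra)). specialize (HC x h Hx ltac:(lra)).
  apply Rle_trans with (Rabs K * Rabs (g2 x h)).
  - pose proof (RRle_abs K). pose proof (Rabs_pos (g2 x h)). nra.
  - rewrite Rmult_assoc. apply Rmult_le_compat_l; [apply Rabs_pos | auto].
Qed.

Lemma bigO_h_plus (k : nat) (g1 g2 : R -> R -> R) :
  bigO_h k g1 -> bigO_h k g2 -> bigO_h k (fun x h => g1 x h + g2 x h).
Proof.
  intros H1 H2 M HM. destruct (H1 M HM) as [C1 [d1 [Hd1 HC1]]].
  destruct (H2 M HM) as [C2 [d2 [Hd2 HC2]]].
  exists (C1 + C2), (Rmin d1 d2). split; [apply Rmin_pos; auto |].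
  intros x h Hx Hh. pose proof (Rmin_l d1 d2). pose proof (Rmin_r d1 d2).
  specialize (HC1 x h Hx ltac:(lra)). specialize (HC2 x h Hx ltac:(lra)).
  pose proof (Rabs_triang (g1 x h) (g2 x h)). lra.
Qed.

Lemma bigO_h_scal (k : nat) (c : R) (g : R -> R -> R) :
  bigO_h k g -> bigO_h k (fun x h => c * g x h).
Proof.
  intros H M HM. destruct (H M HM) as [C [d [Hd HC]]].
  exists (Rabs c * C), d. split; auto. intros x h Hx Hh.
  rewrite Rabs_mult, Rmult_assoc. apply Rmult_le_compat_l; [apply Rabs_pos | auto].
Qed.

Lemma bigO_h_opp (k : nat) (g : R -> R -> R) : bigO_h k g -> bigO_h k (fun x h => - g x h).
Proof.
  intros H. apply (bigO_h_ext k (fun x h => -1 * g x h)); [intros; ring | apply bigO_h_scal; auto].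
Qed.

Lemma bigO_h_minus (k : nat) (g1 g2 : R -> R -> R) :
  bigO_h k g1 -> bigO_h k g2 -> bigO_h k (fun x h => g1 x h - g2 x h).
Proof. intros. apply bigO_h_plus; [| apply bigO_h_opp]; auto. Qed.

Lemma bigO_h_div_const (k : nat) (g : R -> R -> R) (c : R) :
  bigO_h k g -> bigO_h k (fun x h => g x h / c).
Proof.
  intros H. apply (bigO_h_ext k (fun x h => / c * g x h)); [intros; unfold Rdiv; ring |].
  apply bigO_h_scal; auto.
Qed.

Lemma bigO_h_mult (k1 k2 : nat) (g1 g2 : R -> R -> R) :
  bigO_h k1 g1 -> bigO_h k2 g2 -> bigO_h (k1 + k2) (fun x h => g1 x h * g2 x h).
Proof.
  intros H1 H2 M HM. destruct (H1 M HM) as [C1 [d1 [Hd1 HC1]]].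
  destruct (H2 M HM) as [C2 [d2 [Hd2 HC2]]].
  exists (C1 * C2), (Rmin d1 d2). split; [apply Rmin_pos; auto |].
  intros x h Hx Hh. pose proof (Rmin_l d1 d2). pose proof (Rmin_r d1 d2).
  specialize (HC1 x h Hx ltac:(lra)). specialize (HC2 x h Hx ltac:(lra)).
  rewrite Rabs_mult, pow_add.
  replace (C1 * C2 * (h ^ k1 * h ^ k2)) with ((C1 * h ^ k1) * (C2 * h ^ k2)) by ring.
  apply Rmult_le_compat; auto; apply Rabs_pos.
Qed.

Lemma bigO_h_weaken (k k' : nat) (g : R -> R -> R) :
  (k <= k')%nat -> bigO_h k' g -> bigO_h k g.
Proof.
  intros Hk H M HM. destruct (H M HM) as [C [d [Hd HC]]].
  exists (Rmax C 0), (Rmin d 1). split; [apply Rmin_pos; lra |].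
  intros x h Hx Hh. pose proof (Rmin_l d 1). pose proof (Rmin_r d 1).
  specialize (HC x h Hx ltac:(lra)).
  assert (Hpow : 0 <= h ^ k' <= h ^ k).
  { split; [apply pow_le; lra |].
    replace k' with (k + (k' - k))%nat by lia. rewrite pow_add.
    assert (0 <= h ^ k) by (apply pow_le; lra).
    assert (h ^ (k' - k) <= 1) by (rewrite <- (pow1 (k' - k)); apply pow_incr; lra).
    nra. }
  pose proof (Rmax_l C 0). pose proof (Rmax_r C 0). nra.
Qed.

Lemma bigO_h_pow_h (k : nat) : bigO_h k (fun x h => h ^ k).
Proof.
  intros M HM. exists 1, 1. split; [lra |]. intros x h _ Hh.
  rewrite Rabs_right; [lra | apply Rle_ge, pow_le; lra].
Qed.

Lemma bigO_h_div_h (k : nat) (g : R -> R -> R) :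
  bigO_h (S k) g -> bigO_h k (fun x h => g x h / h).
Proof.
  intros H M HM. destruct (H M HM) as [C [d [Hd HC]]].
  exists C, d. split; auto. intros x h Hx Hh.
  specialize (HC x h Hx Hh). simpl in HC.
  unfold Rdiv. rewrite Rabs_mult, Rabs_inv, (Rabs_right h) by lra.
  apply Rmult_le_reg_r with h; [lra |].
  rewrite Rmult_assoc, Rinv_l by lra. lra.
Qed.

Lemma bigO_h_bounded (c : R -> R) :
  (forall L, exists B, forall y, Rabs y <= L -> Rabs (c y) <= B) -> bigO_h 0 (fun x h => c x).
Proof.
  intros H M HM. destruct (H M) as [B HB]. exists B, 1. split; [lra |].
  intros x h Hx _. rewrite pow_O, Rmult_1_r. auto.
Qed.

Lemma bigO_h_continuous (c : R -> R) :
  (forall x, continuous c x) -> bigO_h 0 (fun x h => c x).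
Proof.
  intros H. apply bigO_h_bounded. intros L.
  exact (continuous_bounded c L H).
Qed.

Lemma bigO_h_const (c : R) : bigO_h 0 (fun x h => c).
Proof. apply (bigO_h_bounded (fun _ => c)). intros L. exists (Rabs c). intros; lra. Qed.

Lemma bigO_h_O1_h : bigO_h 0 (fun x h => h).
Proof.
  apply (bigO_h_weaken 0 1); [lia |].
  apply (bigO_h_ext 1 (fun x h => h ^ 1)); [intros; ring | apply bigO_h_pow_h].
Qed.

Lemma bigO_h_O1_pow (n : nat) (g : R -> R -> R) :
  bigO_h 0 g -> bigO_h 0 (fun x h => g x h ^ n).
Proof.
  intros H. induction n as [|n IH].
  - apply (bigO_h_ext 0 (fun x h => 1)); [intros; reflexivity | apply bigO_h_const].
  - apply (bigO_h_mult 0 0 g (fun x h => g x h ^ n)); auto.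
Qed.

Lemma Rabs_mult_le_1 (a h : R) : 0 < h < / (Rabs a + 1) -> Rabs (a * h) <= 1.
Proof.
  intros [Hh0 Hh1]. pose proof (Rabs_pos a).
  rewrite Rabs_mult, (Rabs_right h) by lra.
  apply Rmult_lt_compat_l with (r := Rabs a + 1) in Hh1; [| lra].
  rewrite Rinv_r in Hh1 by lra. nra.
Qed.

Lemma bigO_h_taylor (g : R -> R) (N : nat) (a : R) : smooth1 g ->
  bigO_h (S N) (fun x h => g (x + a * h) - taylor_poly g N x (a * h)).
Proof.
  intros Hg M HM. destruct (taylor_remainder_bound g N M Hg) as [C HC].
  exists (C * Rabs a ^ S N), (/ (Rabs a + 1)). split.
  { apply Rinv_0_lt_compat. pose proof (Rabs_pos a). lra. }
  intros x h Hx Hh.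
  eapply Rle_trans; [apply HC; auto; apply Rabs_mult_le_1; auto |].
  rewrite Rabs_mult, (Rabs_right h), Rpow_mult_distr by lra. lra.
Qed.

Ltac bigO_h_linear :=
  first
  [ assumption
  | apply bigO_h_taylor; assumption
  | match goal with
    | |- bigO_h ?k (fun x h => @?A x h + @?B x h) => apply (bigO_h_plus k A B); bigO_h_linear
    | |- bigO_h ?k (fun x h => @?A x h - @?B x h) => apply (bigO_h_minus k A B); bigO_h_linear
    | |- bigO_h ?k (fun x h => - @?A x h) => apply (bigO_h_opp k A); bigO_h_linear
    | |- bigO_h ?k (fun x h => @?A x h / ?c) => apply (bigO_h_div_const k A c); bigO_h_linear
    | |- bigO_h 0 (fun x h => @?A x h * @?B x h) => apply (bigO_h_mult 0 0 A B); bigO_h_linear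
    | |- bigO_h ?k (fun x h => ?c * @?A x h) => apply (bigO_h_scal k c A); bigO_h_linear
    | |- bigO_h 0 (fun x h => @?A x h ^ ?n) => apply (bigO_h_O1_pow n A); bigO_h_linear
    | |- bigO_h 0 (fun x h => h) => apply bigO_h_O1_h
    | |- bigO_h 0 (fun x h => ?c) => apply bigO_h_const
    | |- bigO_h 0 (fun x h => Derive_n ?g ?n x) =>
        apply (bigO_h_continuous (Derive_n g n)); intro; apply smooth1_continuous; assumption
    end ].

Lemma bigO_h_taylor_poly (g : R -> R) (N : nat) (a : R) : smooth1 g ->
  bigO_h 0 (fun x h => taylor_poly g N x (a * h)).
Proof.
  intros Hg. unfold taylor_poly.
  induction N as [|N IH]; cbn [sum_f_R0]; bigO_h_linear.
Qed.

Lemma bigO_h_approx (j k : nat) (g p : R -> R -> R) : (j <= k)%nat ->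
  bigO_h k (fun x h => g x h - p x h) -> bigO_h j p -> bigO_h j g.
Proof.
  intros Hjk Hgp Hp.
  apply (bigO_h_ext j (fun x h => (g x h - p x h) + p x h)); [intros; ring |].
  apply bigO_h_plus; [apply (bigO_h_weaken j k) |]; auto.
Qed.

Lemma bound_by_steps (s : nat -> R) (N : nat) :
  (forall k, (k < N)%nat -> Rabs (s (S k) - s k) <= 1) -> Rabs (s N) <= Rabs (s 0%nat) + INR N.
Proof.
  induction N as [|N IH]; intros Hs.
  - simpl. lra.
  - rewrite S_INR. pose proof (IH (fun k Hk => Hs k ltac:(lia))).
    pose proof (Hs N ltac:(lia)). pose proof (Rabs_triang_inv (s (S N)) (s N)). lra.
Qed.

Lemma continuous2_bounded (P : R -> R -> R) (L : R) :
  (forall x y, continuous (fun p : R * R => P (fst p) (snd p)) (x, y)) ->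
  exists K, forall a b, Rabs a <= L -> Rabs b <= L -> Rabs (P a b) <= K.
Proof.
  intros Hc.
  destruct (uniform_continuity_2d P (- Rabs L) (Rabs L) (- Rabs L) (Rabs L)
              (fun x y _ _ => proj2 (continuity_2d_pt_filterlim P x y) (Hc x y))
              (mkposreal 1 Rlt_0_1)) as [delta Hd].
  pose proof (cond_pos delta) as Hdelta.
  destruct (INR_unbounded (Rabs L / delta)) as [N HN].
  assert (HN0 : 0 < INR N).
  { apply Rle_lt_trans with (Rabs L / delta); [| lra].
    apply Rdiv_le_0_compat; [apply Rabs_pos | lra]. }
  assert (HLN : Rabs L / INR N < delta).
  { apply Rmult_lt_reg_r with (INR N); auto. unfold Rdiv in *.
    rewrite Rmult_assoc, Rinv_l by lra.
    apply Rmult_lt_reg_r with (/ delta); [apply Rinv_0_lt_compat; lra |].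
    replace (delta * INR N * / delta) with (INR N) by (field; lra). lra. }
  exists (Rabs (P 0 0) + INR N). intros a b Ha Hb.
  set (pt := fun (c : R) (k : nat) => INR k * c / INR N).
  assert (Hpt_in : forall c k, Rabs c <= L -> (k <= N)%nat -> - Rabs L <= pt c k <= Rabs L).
  { intros c k Hc' Hk. apply Rabs_le_between. unfold pt, Rdiv.
    pose proof (le_INR _ _ Hk). pose proof (pos_INR k). pose proof (Rle_abs L).
    rewrite !Rabs_mult, Rabs_inv, (Rabs_right (INR k)), (Rabs_right (INR N)) by lra.
    apply Rmult_le_reg_r with (INR N); auto.
    rewrite Rmult_assoc, Rinv_l by lra. pose proof (Rabs_pos c). nra. }
  assert (Hpt_step : forall c k, Rabs c <= L -> Rabs (pt c (S k) - pt c k) < delta).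
  { intros c k Hc'. unfold pt. rewrite S_INR.
    replace ((INR k + 1) * c / INR N - INR k * c / INR N) with (c / INR N) by (field; lra).
    unfold Rdiv. rewrite Rabs_mult, Rabs_inv, (Rabs_right (INR N)) by lra.
    apply Rle_lt_trans with (Rabs L / INR N); auto. unfold Rdiv.
    apply Rmult_le_compat_r; [apply Rlt_le, Rinv_0_lt_compat; lra |].
    pose proof (Rle_abs L). lra. }
  pose proof (bound_by_steps (fun k => P (pt a k) (pt b k)) N) as Hsteps.
  cbv beta in Hsteps.
  assert (HptN : forall c, pt c N = c) by (intros; unfold pt; field; lra).
  assert (Hpt0 : forall c, pt c 0%nat = 0) by (intros; unfold pt; simpl; field; lra).
  rewrite !HptN, !Hpt0 in Hsteps.
  apply Hsteps. intros k Hk. apply Rlt_le.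
  apply Hd; auto using Hpt_in with arith.
Qed.

Definition cfsr_flux_nodes (f : R -> R) (Dbar : R -> R -> R) (kappa kappa3 theta h : R)
    (a b c d e g : R) : R :=
  let uxj := (d - b) / (2 * h) in
  let uxk := (e - c) / (2 * h) in
  let uxxj := ((e - c) / (2 * h) - (c - a) / (2 * h)) / (2 * h) in
  let uxxk := ((g - d) / (2 * h) - (d - b) / (2 * h)) / (2 * h) in
  let Tj := h / 4 * (uxk - uxj) - h ^ 2 / 4 * uxxj in
  let Tk := h / 4 * (uxk - uxj) - h ^ 2 / 4 * uxxk in
  let uL := kappa * ((c + d) / 2) + (1 - kappa) * (c + h / 2 * uxj) + kappa3 * Tj in
  let uR := kappa * ((c + d) / 2) + (1 - kappa) * (d - h / 2 * uxk) + kappa3 * Tk in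
  let fL := theta * ((f c + f d) / 2) + (1 - theta) * (f c + Derive f c * (h / 2) * uxj) in
  let fR := theta * ((f c + f d) / 2) + (1 - theta) * (f d - Derive f d * (h / 2) * uxk) in
  (fL + fR) / 2 - Dbar c d * (uR - uL) / 2.

Lemma cfsr_flux_nodesE f D Dbar kappa kappa3 theta h uv i :
  cfsr_flux f D Dbar kappa kappa3 theta h uv i =
  cfsr_flux_nodes f Dbar kappa kappa3 theta h (uv (i - 2)%Z) (uv (i - 1)%Z) (uv i)
    (uv (i + 1)%Z) (uv (i + 2)%Z) (uv (i + 3)%Z).
Proof.
  unfold cfsr_flux, cfsr_flux_nodes, uxx, ux.
  replace (i + 1 + 1 + 1)%Z with (i + 3)%Z by ring.
  replace (i + 1 + 1 - 1)%Z with (i + 1)%Z by ring.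
  replace (i + 1 - 1 + 1)%Z with (i + 1)%Z by ring.
  replace (i + 1 - 1 - 1)%Z with (i - 1)%Z by ring.
  replace (i + 1 + 1)%Z with (i + 2)%Z by ring.
  replace (i + 1 - 1)%Z with i by ring.
  replace (i - 1 + 1)%Z with i by ring.
  replace (i - 1 - 1)%Z with (i - 2)%Z by ring.
  reflexivity.
Qed.

Definition cfsr_E_local (f : R -> R) (Dbar : R -> R -> R) (kappa kappa3 theta : R)
    (u : R -> R) (x h : R) : R :=
  (cfsr_flux_nodes f Dbar kappa kappa3 theta h (u (x + -2 * h)) (u (x + -1 * h)) (u (x + 0 * h))
      (u (x + 1 * h)) (u (x + 2 * h)) (u (x + 3 * h))
   - cfsr_flux_nodes f Dbar kappa kappa3 theta h (u (x + -3 * h)) (u (x + -2 * h))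
      (u (x + -1 * h)) (u (x + 0 * h)) (u (x + 1 * h)) (u (x + 2 * h))) / h.

Lemma cfsr_E_localE f D Dbar kappa kappa3 theta u h j :
  cfsr_E f D Dbar kappa kappa3 theta u h j
  = cfsr_E_local f Dbar kappa kappa3 theta u (IZR j * h) h.
Proof.
  unfold cfsr_E, cfsr_E_local. rewrite !cfsr_flux_nodesE.
  f_equal. f_equal; f_equal; f_equal; rewrite ?plus_IZR, ?minus_IZR; ring.
Qed.

(* [f'(u_j) (u_x)_j] computed from [a, b, c] = [u_(j-1), u_j, u_(j+1)]. *)
Definition slope_f (f : R -> R) (h a b c : R) : R := Derive f b * ((c - a) / (2 * h)).

(* [u_R - u_L] at the face [i + 1/2], from the stencil [a, ..., g] = [u_(i-2), ..., u_(i+3)]. *)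
Definition jump_u (kappa kappa3 a b c d e g : R) : R :=
  (1 - kappa) * (d - c - (d - b) / 4 - (e - c) / 4)
  - kappa3 / 16 * (g - 2 * d + b - e + 2 * c - a).

Lemma cfsr_E_local_split f Dbar kappa kappa3 theta (u : R -> R) (x h : R) : h <> 0 ->
  cfsr_E_local f Dbar kappa kappa3 theta u x h =
  (f (u (x + 1 * h)) - f (u (x + -1 * h))) / (2 * h)
  - (1 - theta) / 4 * (slope_f f h (u (x + 0 * h)) (u (x + 1 * h)) (u (x + 2 * h))
                     - 2 * slope_f f h (u (x + -1 * h)) (u (x + 0 * h)) (u (x + 1 * h))
                     + slope_f f h (u (x + -2 * h)) (u (x + -1 * h)) (u (x + 0 * h)))
  - (Dbar (u (x + 0 * h)) (u (x + 1 * h)) *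
       jump_u kappa kappa3 (u (x + -2 * h)) (u (x + -1 * h)) (u (x + 0 * h))
         (u (x + 1 * h)) (u (x + 2 * h)) (u (x + 3 * h))
     - Dbar (u (x + -1 * h)) (u (x + 0 * h)) *
       jump_u kappa kappa3 (u (x + -3 * h)) (u (x + -2 * h)) (u (x + -1 * h))
         (u (x + 0 * h)) (u (x + 1 * h)) (u (x + 2 * h))) / (2 * h).
Proof. intros Hh. unfold cfsr_E_local, cfsr_flux_nodes, jump_u, slope_f. field. auto. Qed.

Definition central_diff_poly (u : R -> R) (n x h : R) : R :=
  Derive_n u 1 x + Derive_n u 2 x * (n * h)
  + Derive_n u 3 x * ((3 * n ^ 2 + 1) / 6 * h ^ 2) + Derive_n u 4 x * ((n ^ 3 + n) / 6 * h ^ 3).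

Lemma central_diff_expansion (u : R -> R) (n m p : R) : smooth1 u -> p = n + 1 -> m = n - 1 ->
  bigO_h 4 (fun x h => (u (x + p * h) - u (x + m * h)) / (2 * h) - central_diff_poly u n x h).
Proof.
  intros Hu Hp Hm.
  apply (bigO_h_ext 4 (fun x h => / 2 * (((u (x + p * h) - taylor_poly u 4 x (p * h))
                                       - (u (x + m * h) - taylor_poly u 4 x (m * h))) / h))).
  { intros x h Hh. unfold taylor_poly, central_diff_poly. subst p m. simpl. field. lra. }
  apply bigO_h_scal, bigO_h_div_h. bigO_h_linear.
Qed.

Lemma slope_f_expansion (f u : R -> R) (n m p : R) : smooth1 f -> smooth1 u ->
  p = n + 1 -> m = n - 1 ->
  bigO_h 4 (fun x h => slope_f f h (u (x + m * h)) (u (x + n * h)) (u (x + p * h))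
     - taylor_poly (fun y => Derive f (u y)) 3 x (n * h) * central_diff_poly u n x h).
Proof.
  intros Hf Hu Hp Hm. set (G := fun y => Derive f (u y)).
  assert (HG : smooth1 G) by exact (smooth1_comp _ u (smooth1_Derive f Hf) Hu).
  pose proof (central_diff_expansion u n m p Hu Hp Hm) as HX.
  set (X := fun x h => (u (x + p * h) - u (x + m * h)) / (2 * h)) in HX.
  apply (bigO_h_ext 4 (fun x h =>
     (G (x + n * h) - taylor_poly G 3 x (n * h)) * (central_diff_poly u n x h + (X x h - central_diff_poly u n x h))
     + taylor_poly G 3 x (n * h) * (X x h - central_diff_poly u n x h))).
  { intros x h Hh. unfold slope_f, X, G. ring. }
  apply bigO_h_plus.
  - apply (bigO_h_mult 4 0); [bigO_h_linear |].
    apply bigO_h_plus; [unfold central_diff_poly; bigO_h_linear |].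
    apply (bigO_h_weaken 0 4); [lia | exact HX].
  - apply (bigO_h_mult 0 4); [| exact HX].
    apply bigO_h_taylor_poly; auto.
Qed.

Lemma slope_f_second_diff_expansion (f u : R -> R) : smooth1 f -> smooth1 u ->
  let G := fun y => Derive f (u y) in
  bigO_h 4 (fun x h => (slope_f f h (u (x + 0 * h)) (u (x + 1 * h)) (u (x + 2 * h))
                     - 2 * slope_f f h (u (x + -1 * h)) (u (x + 0 * h)) (u (x + 1 * h))
                     + slope_f f h (u (x + -2 * h)) (u (x + -1 * h)) (u (x + 0 * h)))
     - h ^ 2 * (Derive_n G 2 x * Derive_n u 1 x + 2 * Derive_n G 1 x * Derive_n u 2 x
                 + G x * Derive_n u 3 x)).
Proof.
  intros Hf Hu G.
  assert (HG : smooth1 G) by exact (smooth1_comp _ u (smooth1_Derive f Hf) Hu).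
  pose proof (slope_f_expansion f u 1 0 2 Hf Hu ltac:(ring) ltac:(ring)) as H1.
  pose proof (slope_f_expansion f u 0 (-1) 1 Hf Hu ltac:(ring) ltac:(ring)) as H0.
  pose proof (slope_f_expansion f u (-1) (-2) 0 Hf Hu ltac:(ring) ltac:(ring)) as Hm.
  fold G in H1, H0, Hm.
  (* the second difference of the three products is h^2 (G u')'' plus an explicit h^4 term *)
  apply (bigO_h_ext 4 (fun x h =>
     (slope_f f h (u (x + 0 * h)) (u (x + 1 * h)) (u (x + 2 * h))
        - taylor_poly G 3 x (1 * h) * central_diff_poly u 1 x h)
     - 2 * (slope_f f h (u (x + -1 * h)) (u (x + 0 * h)) (u (x + 1 * h))
        - taylor_poly G 3 x (0 * h) * central_diff_poly u 0 x h)
     + (slope_f f h (u (x + -2 * h)) (u (x + -1 * h)) (u (x + 0 * h))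
        - taylor_poly G 3 x (-1 * h) * central_diff_poly u (-1) x h)
     + h ^ 4 * (2 / 3 * Derive_n G 1 x * Derive_n u 4 x + 2 / 3 * Derive_n G 2 x * Derive_n u 3 x
        + 1 / 9 * Derive_n G 3 x * h ^ 2 * Derive_n u 4 x + 1 / 3 * Derive_n G 3 x * Derive_n u 2 x))).
  { intros x h Hh. unfold taylor_poly, central_diff_poly. simpl. field. }
  apply bigO_h_plus; [bigO_h_linear |].
  apply (bigO_h_mult 4 0); [apply bigO_h_pow_h | bigO_h_linear].
Qed.

(* The leading term is (kappa - 1 - kappa3)/4 h^3 u''' at the face x + (s + 1/2) h. *)
Lemma jump_u_expansion (u : R -> R) (kappa kappa3 s a b c d e g : R) : smooth1 u ->
  a = s - 2 /\ b = s - 1 /\ c = s /\ d = s + 1 /\ e = s + 2 /\ g = s + 3 ->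
  bigO_h 5 (fun x h =>
    jump_u kappa kappa3 (u (x + a * h)) (u (x + b * h)) (u (x + c * h))
      (u (x + d * h)) (u (x + e * h)) (u (x + g * h))
    - (kappa - 1 - kappa3) / 4 * (h ^ 3 * Derive_n u 3 x + (s + 1 / 2) * h ^ 4 * Derive_n u 4 x)).
Proof.
  intros Hu (Ha & Hb & Hc & Hd & He & Hg).
  apply (bigO_h_ext 5 (fun x h => jump_u kappa kappa3
     (u (x + a * h) - taylor_poly u 4 x (a * h)) (u (x + b * h) - taylor_poly u 4 x (b * h))
     (u (x + c * h) - taylor_poly u 4 x (c * h)) (u (x + d * h) - taylor_poly u 4 x (d * h))
     (u (x + e * h) - taylor_poly u 4 x (e * h)) (u (x + g * h) - taylor_poly u 4 x (g * h)))).
  { intros x h _. unfold jump_u, taylor_poly. subst. simpl. field. }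
  unfold jump_u. bigO_h_linear.
Qed.

Section SymmetricKernel.

Variable pd : nat -> nat -> R -> R -> R.
Hypothesis pd_partials : forall (m n : nat) (x y : R),
  is_derive (fun t => pd m n t y) x (pd (S m) n x y) /\
  is_derive (fun t => pd m n x t) y (pd m (S n) x y) /\
  continuous (fun p : R * R => pd m n (fst p) (snd p)) (x, y).

Lemma pd_increment_snd (m n : nat) (a y1 y2 c K : R) :
  (forall t, Rabs (t - y1) <= Rabs (y2 - y1) -> Rabs (pd m (S n) a t - c) <= K) ->
  Rabs (pd m n a y2 - pd m n a y1 - c * (y2 - y1)) <= K * Rabs (y2 - y1).
Proof.
  intros HK.
  replace (pd m n a y2 - pd m n a y1 - c * (y2 - y1))
    with ((pd m n a y2 - c * y2) - (pd m n a y1 - c * y1)) by ring.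
  apply (bounded_variation (fun s => pd m n a s - c * s) (fun s => pd m (S n) a s - c)).
  intros t Ht. split; [| apply HK; auto].
  apply (is_derive_minus (fun s => pd m n a s) (fun s => c * s)); [apply pd_partials |].
  auto_derive; [exact I | ring].
Qed.

Lemma pd_taylor2_snd (a b K : R) :
  (forall t, Rabs (t - a) <= Rabs (b - a) -> Rabs (pd 0 2 a t) <= K) ->
  Rabs (pd 0 0 a b - pd 0 0 a a - pd 0 1 a a * (b - a)) <= K * (b - a) ^ 2.
Proof.
  intros HK.
  assert (HK0 : 0 <= K).
  { pose proof (Rabs_pos (pd 0 2 a a)). pose proof (Rabs_pos (b - a)).
    specialize (HK a). rewrite Rminus_diag, Rabs_R0 in HK. pose proof (HK ltac:(auto)). lra. }
  replace (K * (b - a) ^ 2) with (K * Rabs (b - a) * Rabs (b - a))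
    by (rewrite Rmult_assoc, <- Rabs_mult, Rabs_right; [ring | apply Rle_ge, Rle_0_sqr]).
  apply pd_increment_snd. intros t Ht.
  pose proof (pd_increment_snd 0 1 a a t 0 K) as Hinc.
  rewrite Rmult_0_l, Rminus_0_r in Hinc.
  eapply Rle_trans; [apply Hinc | apply Rmult_le_compat_l; auto].
  intros s Hs. rewrite Rminus_0_r. apply HK. lra.
Qed.

Hypothesis pd_sym : forall v w, pd 0 0 v w = pd 0 0 w v.

(* By symmetry, D(v+h) - D(v) = [Dbar(v+h,v+h) - Dbar(v+h,v)] + [Dbar(v,v+h) - Dbar(v,v)],
   and each bracket is h d2Dbar(v,v) + o(h) by continuity of d2Dbar. *)
Lemma is_derive_pd_diag (v : R) : is_derive (fun t => pd 0 0 t t) v (2 * pd 0 1 v v).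
Proof.
  apply is_derive_Reals. intros eps Heps.
  pose proof (proj2 (proj2 (pd_partials 0 1 v v))) as Hc.
  apply continuity_2d_pt_filterlim in Hc.
  destruct (Hc (mkposreal (eps / 4) ltac:(lra))) as [d Hd]. simpl in Hd.
  exists d. intros h Hh0 Hh.
  assert (Hinc : forall a, Rabs (a - v) < d ->
     Rabs (pd 0 0 a (v + h) - pd 0 0 a v - pd 0 1 v v * (v + h - v)) <= eps / 4 * Rabs (v + h - v)).
  { intros a Ha. apply pd_increment_snd. intros t Ht.
    apply Rlt_le, Hd; auto. replace (v + h - v) with h in Ht by ring. lra. }
  pose proof (Hinc v ltac:(rewrite Rminus_diag, Rabs_R0; apply cond_pos)) as H1.
  pose proof (Hinc (v + h) ltac:(replace (v + h - v) with h by ring; auto)) as H2.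
  replace (v + h - v) with h in H1, H2 by ring.
  replace ((pd 0 0 (v + h) (v + h) - pd 0 0 v v) / h - 2 * pd 0 1 v v)
    with (((pd 0 0 (v + h) (v + h) - pd 0 0 (v + h) v - pd 0 1 v v * h)
          + (pd 0 0 v (v + h) - pd 0 0 v v - pd 0 1 v v * h)) / h)
    by (rewrite (pd_sym (v + h) v); field; auto).
  assert (Hh' : 0 < Rabs h) by (apply Rabs_pos_lt; auto).
  unfold Rdiv. rewrite Rabs_mult, Rabs_inv.
  apply Rmult_lt_reg_r with (Rabs h); auto. rewrite Rmult_assoc, Rinv_l, Rmult_1_r by lra.
  pose proof (Rabs_triang (pd 0 0 (v + h) (v + h) - pd 0 0 (v + h) v - pd 0 1 v v * h)
                          (pd 0 0 v (v + h) - pd 0 0 v v - pd 0 1 v v * h)). nra.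
Qed.

Lemma bigO_h_pd_diag (m n : nat) (u : R -> R) : smooth1 u ->
  bigO_h 0 (fun x h => pd m n (u x) (u x)).
Proof.
  intros Hu. apply (bigO_h_continuous (fun x => pd m n (u x) (u x))). intro x.
  assert (Hux : continuous u x) by exact (smooth1_continuous u 0 x Hu).
  apply (continuous_comp_2 u u (pd m n)); auto. apply pd_partials.
Qed.

Lemma pd_node_expansion (u : R -> R) (a : R) : smooth1 u ->
  bigO_h 2 (fun x h => pd 0 0 (u x) (u (x + a * h)) - pd 0 0 (u x) (u x)
                       - pd 0 1 (u x) (u x) * (a * h * Derive_n u 1 x)).
Proof.
  intros Hu.
  apply (bigO_h_ext 2 (fun x h =>
     (pd 0 0 (u x) (u (x + a * h)) - pd 0 0 (u x) (u x) - pd 0 1 (u x) (u x) * (u (x + a * h) - u x))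
     + pd 0 1 (u x) (u x) * (u (x + a * h) - taylor_poly u 1 x (a * h)))).
  { intros x h _. unfold taylor_poly. simpl. field. }
  apply bigO_h_plus.
  - apply (bigO_h_le 2 _ (fun x h => (u (x + a * h) - taylor_poly u 0 x (a * h))
                                     * (u (x + a * h) - taylor_poly u 0 x (a * h)))).
    2: apply (bigO_h_mult 1 1); apply bigO_h_taylor; auto.
    intros M HM.
    destruct (continuous_bounded u (M + 1)) as [B HB].
    { intro; exact (smooth1_continuous u 0 _ Hu). }
    destruct (continuous2_bounded (pd 0 2) (3 * B)) as [K HK]; [intros; apply pd_partials |].
    exists K, (/ (Rabs a + 1)). split; [apply Rinv_0_lt_compat; pose proof (Rabs_pos a); lra |].
    intros x h Hx Hh.
    assert (Hxa : Rabs (x + a * h) <= M + 1).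
    { pose proof (Rabs_mult_le_1 a h Hh). pose proof (Rabs_triang x (a * h)). lra. }
    pose proof (HB x ltac:(lra)) as Hux. pose proof (HB _ Hxa) as Huxa.
    pose proof (Rabs_pos (u x)).
    replace (taylor_poly u 0 x (a * h)) with (u x) by (unfold taylor_poly; simpl; field).
    rewrite (Rabs_right ((u (x + a * h) - u x) * _)) by (apply Rle_ge, Rle_0_sqr).
    replace ((u (x + a * h) - u x) * (u (x + a * h) - u x)) with ((u (x + a * h) - u x) ^ 2) by ring.
    apply pd_taylor2_snd. intros t Ht. apply HK; [lra |].
    pose proof (Rabs_triang_inv t (u x)). pose proof (Rabs_triang (u (x + a * h)) (- u x)).
    rewrite Rabs_Ropp in *. unfold Rminus in *. lra.
  - apply (bigO_h_mult 0 2); [apply bigO_h_pd_diag; auto | apply bigO_h_taylor; auto].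
Qed.

Lemma dissipation_expansion (u : R -> R) (kappa kappa3 : R) : smooth1 u ->
  bigO_h 4 (fun x h =>
    (pd 0 0 (u (x + 0 * h)) (u (x + 1 * h)) *
       jump_u kappa kappa3 (u (x + -2 * h)) (u (x + -1 * h)) (u (x + 0 * h))
         (u (x + 1 * h)) (u (x + 2 * h)) (u (x + 3 * h))
     - pd 0 0 (u (x + -1 * h)) (u (x + 0 * h)) *
       jump_u kappa kappa3 (u (x + -3 * h)) (u (x + -2 * h)) (u (x + -1 * h))
         (u (x + 0 * h)) (u (x + 1 * h)) (u (x + 2 * h))) / (2 * h)
    - (kappa - 1 - kappa3) / 8 * h ^ 3 * (pd 0 0 (u x) (u x) * Derive_n u 4 x
        + 2 * pd 0 1 (u x) (u x) * Derive_n u 1 x * Derive_n u 3 x)).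
Proof.
  intros Hu.
  set (QW s := fun x h =>
    (kappa - 1 - kappa3) / 4 * (h ^ 3 * Derive_n u 3 x + (s + 1 / 2) * h ^ 4 * Derive_n u 4 x)).
  set (A a := fun x h => pd 0 0 (u x) (u (x + a * h))).
  set (QA a := fun x h => pd 0 0 (u x) (u x) + pd 0 1 (u x) (u x) * (a * h * Derive_n u 1 x)).
  pose proof (jump_u_expansion u kappa kappa3 0 (-2) (-1) 0 1 2 3 Hu
                ltac:(repeat split; ring)) as HW1.
  pose proof (jump_u_expansion u kappa kappa3 (-1) (-3) (-2) (-1) 0 1 2 Hu
                ltac:(repeat split; ring)) as HW0.
  fold (QW 0) (QW (-1)) in HW1, HW0.
  set (W1 := fun x h => jump_u kappa kappa3 (u (x + -2 * h)) (u (x + -1 * h)) (u (x + 0 * h))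
                          (u (x + 1 * h)) (u (x + 2 * h)) (u (x + 3 * h))) in HW1.
  set (W0 := fun x h => jump_u kappa kappa3 (u (x + -3 * h)) (u (x + -2 * h)) (u (x + -1 * h))
                          (u (x + 0 * h)) (u (x + 1 * h)) (u (x + 2 * h))) in HW0.
  assert (HW3 : forall W s, bigO_h 5 (fun x h => W x h - QW s x h) -> bigO_h 3 W).
  { intros W s HW. apply (bigO_h_approx 3 5 _ (QW s)); auto.
    apply (bigO_h_ext 3 (fun x h => h ^ 3 * ((kappa - 1 - kappa3) / 4
                         * (Derive_n u 3 x + (s + 1 / 2) * h * Derive_n u 4 x)))).
    { intros; unfold QW; ring. }
    apply (bigO_h_mult 3 0); [apply bigO_h_pow_h | bigO_h_linear]. }
  assert (HA : forall a, bigO_h 2 (fun x h => A a x h - QA a x h)).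
  { intro a. eapply bigO_h_ext; [| apply (pd_node_expansion u a Hu)].
    intros; unfold A, QA; ring. }
  assert (HQA : forall a, bigO_h 0 (QA a)).
  { intro a. unfold QA. pose proof (bigO_h_pd_diag 0 0 u Hu). pose proof (bigO_h_pd_diag 0 1 u Hu).
    bigO_h_linear. }
  (* the products QA a * QW s of the leading terms reproduce the target exactly *)
  apply (bigO_h_ext 4 (fun x h => / 2 * (((A 1 x h - QA 1 x h) * W1 x h + QA 1 x h * (W1 x h - QW 0 x h)
      - ((A (-1) x h - QA (-1) x h) * W0 x h + QA (-1) x h * (W0 x h - QW (-1) x h))) / h))).
  { intros x h Hh. unfold A, QA, W1, W0, QW.
    rewrite (pd_sym (u (x + -1 * h)) (u (x + 0 * h))).
    replace (x + 0 * h) with x by ring. field. lra. }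
  apply bigO_h_scal, bigO_h_div_h.
  apply bigO_h_minus; apply bigO_h_plus;
    [apply (bigO_h_mult 2 3) | apply (bigO_h_mult 0 5) | apply (bigO_h_mult 2 3) | apply (bigO_h_mult 0 5)];
    eauto.
Qed.

End SymmetricKernel.

Lemma cfsr_E_local_expansion (u f D : R -> R) (Dbar : R -> R -> R) (kappa kappa3 theta : R) :
  smooth1 u -> smooth1 f -> smooth1 D -> smooth2 Dbar ->
  (forall v w, Dbar v w = Dbar w v) -> (forall v, Dbar v v = D v) ->
  bigO_h 4 (fun x h => cfsr_E_local f Dbar kappa kappa3 theta u x h
     - (Derive (fun y => f (u y)) x
        + (3 * theta - 1) / 12 * Derive_n (fun y => f (u y)) 3 x * h ^ 2
        + (1 - kappa + kappa3) / 8 *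
            (Derive (fun y => D (u y)) x * Derive_n u 3 x + D (u x) * Derive_n u 4 x) * h ^ 3)).
Proof.
  intros Hu Hf HD [pd [<- Hpd]] Hsym HDiag.
  assert (HD' : forall v, Derive D v = 2 * pd 0%nat 1%nat v v).
  { intro v. apply is_derive_unique.
    replace D with (fun t => pd 0%nat 0%nat t t) by (apply functional_extensionality; auto).
    apply is_derive_pd_diag; auto. }
  pose proof (central_diff_expansion (fun y => f (u y)) 0 (-1) 1 (smooth1_comp f u Hf Hu)
                ltac:(ring) ltac:(ring)) as Hcentral.
  pose proof (bigO_h_scal 4 ((1 - theta) / 4) _ (slope_f_second_diff_expansion f u Hf Hu)) as Hslope.
  pose proof (dissipation_expansion pd Hpd Hsym u kappa kappa3 Hu) as Hdiss.
  eapply bigO_h_ext; [| exact (bigO_h_minus 4 _ _ (bigO_h_minus 4 _ _ Hcentral Hslope) Hdiss)].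
  intros x h Hh. cbv beta.
  rewrite cfsr_E_local_split by lra. unfold central_diff_poly.
  rewrite (Derive_n_3_comp f u x Hf Hu), (Derive_comp D u x (HD 0%nat _) (Hu 0%nat _)), HD', <- HDiag.
  change (Derive (fun y => f (u y)) x) with (Derive_n (fun y => f (u y)) 1 x).
  change (Derive u x) with (Derive_n u 1 x).
  field. lra.
Qed.

Theorem mainTheorem5 :
  forall (u f D : R -> R) (Dbar : R -> R -> R) (kappa kappa3 theta : R),
    smooth1 u -> smooth1 f -> smooth1 D -> smooth2 Dbar ->
    (forall v w, Dbar v w = Dbar w v) ->
    (forall v, Dbar v v = D v) ->
    (* part 1: kappa3 = 0 *)
    (kappa3 = 0 ->
     forall M : R, 0 < M ->
     exists C delta : R, 0 < delta /\
       forall (h : R) (j : Z), 0 < h < delta -> Rabs (IZR j * h) <= M ->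
         let x := IZR j * h in
         Rabs (cfsr_E f D Dbar kappa kappa3 theta u h j
               - (Derive (fun y => f (u y)) x
                  + (3 * theta - 1) / 12 * Derive_n (fun y => f (u y)) 3 x * h ^ 2
                  - (kappa - 1) / 8 *
                      (Derive (fun y => D (u y)) x * Derive_n u 3 x
                       + D (u x) * Derive_n u 4 x) * h ^ 3))
         <= C * h ^ 4) /\
    (* part 2: theta = 1/3 and kappa3 = kappa - 1 *)
    (theta = 1 / 3 -> kappa3 = kappa - 1 ->
     forall M : R, 0 < M ->
     exists C delta : R, 0 < delta /\
       forall (h : R) (j : Z), 0 < h < delta -> Rabs (IZR j * h) <= M ->
         let x := IZR j * h in
         Rabs (cfsr_E f D Dbar kappa kappa3 theta u h j
               - Derive (fun y => f (u y)) x)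
         <= C * h ^ 4).
Proof.
  intros u f D Dbar kappa kappa3 theta Hu Hf HD HDbar Hsym HDiag.
  pose proof (cfsr_E_local_expansion u f D Dbar kappa kappa3 theta Hu Hf HD HDbar Hsym HDiag) as HE.
  split; [intros Hk3 | intros Htheta Hk3]; intros M HM;
    destruct (HE M HM) as [C [delta [Hdelta HC]]]; exists C, delta; split; auto;
    intros h j Hh Hx; rewrite cfsr_E_localE;
    refine (Rle_trans _ _ _ _ (HC (IZR j * h) h Hx Hh)); right; f_equal; subst; field.
Qed.
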